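(* Let $n,x$ be integers with $1<x<n$, so that $G=C_{2n}(x,1,n)$ is a $5$-regular circulant graph. If $n\equiv 1\pmod 3$, $x\equiv 2\pmod 3$ and $1<x\leq \tfrac{2n}{3}$, then $G$ is word-representable.
   Context: Two distinct letters $x,y$ alternate in a word $w$ if, after deleting all other letters from $w$, the resulting word is of the form $xyxy\cdots$ or $yxyx\cdots$ (of even or odd length). A graph $G=(V,E)$ is word-representable if there is a word $w$ over the alphabet $V$, containing every letter of $V$ at least once, such that for all distinct $x,y\in V$, $xy\in E$ if and only if $x$ and $y$ alternate in $w$. For an integer $m$ and a set $R$ of positive integers each at most $m/2$, the circulant graph $C_m(R)$ has vertex set $\{0,1,\dots,m-1\}$, with $i$ and $j$ adjacent iff $\min(|i-j|,\,m-|i-j|)\in R$. $C_{2n}(x,1,n)$ denotes the circulant graph on $2n$ vertices with jump set $\{1,x,n\}$; it is $5$-regular exactly when $1<x<n$. *)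

From mathcomp Require Import all_boot.
Set Implicit Arguments. Unset Strict Implicit. Unset Printing Implicit Defensive.

Definition alt_seq (T : Type) (a b : T) (k : nat) : seq T :=
  mkseq (fun i => if odd i then b else a) k.

Definition alternate (T : eqType) (w : seq T) (x y : T) : bool :=
  let s := filter (fun z => (z == x) || (z == y)) w in
  (s == alt_seq x y (size s)) || (s == alt_seq y x (size s)).

Definition word_representable (T : finType) (E : rel T) : Prop :=
  exists w : seq T, (forall v : T, v \in w) /\
    (forall x y : T, x != y -> (E x y <-> alternate w x y)).

Definition circ_dist (m : nat) (i j : 'I_m) : nat :=
  let d := maxn i j - minn i j in minn d (m - d).

Definition circulant_adj (m : nat) (R : seq nat) : rel 'I_m :=
  fun i j => (i != j) && (circ_dist i j \in R).
Arguments circulant_adj m R : clear implicits.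

(* Semi-transitive orientations give word-representants.  Orient each edge along
   a ranking r and suppose that the vertices of every directed path v0 -> ... -> vk
   with an arc v0 -> vk are pairwise adjacent.  For every vertex u write the
   rank-ordered lists of A, D, ~A, ~D and then of all vertices, D, ~D, where D is
   the set of vertices below u and A the set of vertices that reach D or an
   out-neighbour of D.  An arc u -> v reads u v u v u v u v in each such word,
   while for a non-edge u, v with r u < r v the word of u (if u reaches v;
   semi-transitivity keeps v out of A) or of v (otherwise) contains a square
   u u or v v.

   For C_2n(1, x, n) rank vertex i by (i mod 3, i).  As n = 1 and x = 2 mod 3,
   every arc raises i mod 3 except the jumps i -> i + 2n - x with i < x; with
   3x <= 2n a case analysis shows that directed paths have at most four arcs,
   shortcut paths at most three, and that the chords of a shortcut path with
   three arcs join antipodal vertices. *)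

From mathcomp Require Import all_boot zify.
Set Implicit Arguments. Unset Strict Implicit. Unset Printing Implicit Defensive.

Section AlternatingSequences.
Variable T : eqType.
Implicit Types (a b : T) (s w : seq T).

Lemma alt_seqS a b k : alt_seq a b k.+1 = a :: alt_seq b a k.
Proof.
rewrite /alt_seq /mkseq /= -[1]addn0 iotaDl -map_comp.
by congr (_ :: _); apply: eq_map => i /=; case: (odd i).
Qed.

Lemma alt_seq_cat a b m k :
  alt_seq a b (2 * m + k) = alt_seq a b (2 * m) ++ alt_seq a b k.
Proof.
elim: m => [|m IHm] //.
by rewrite mulnS -addnA !addSn !alt_seqS IHm.
Qed.

Lemma flatten_alt_seq (I : Type) (s : seq I) (f : I -> seq T) a b m :
  (forall i, f i = alt_seq a b (2 * m)) ->
  flatten (map f s) = alt_seq a b (size s * (2 * m)).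
Proof.
move=> fE; elim: s => [|i s IHs] //=.
by rewrite fE IHs mulSn alt_seq_cat.
Qed.

Lemma path_alt_seq a b k : a != b -> path [rel u v | u != v] b (alt_seq a b k).
Proof.
elim: k a b => [|k IHk] a b ab //.
by rewrite alt_seqS /= eq_sym ab IHk // eq_sym.
Qed.

Lemma alternate_sorted w a b : a != b -> alternate w a b ->
  sorted [rel u v | u != v] (filter (pred2 a b) w).
Proof.
move=> ab; rewrite /alternate -[filter _ w]/(filter (pred2 a b) w).
have ba : b != a by rewrite eq_sym.
by case/orP=> /eqP ->; case: (size _) => [|k] //; rewrite alt_seqS /= path_alt_seq.
Qed.

Lemma alternate_sym w a b : alternate w a b = alternate w b a.
Proof.
rewrite /alternate orbC; congr (_ || _);
  by rewrite (eq_filter (a2 := pred2 b a)) // => z /=; rewrite orbC.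
Qed.

Lemma infix_flatten (ss : seq (seq T)) s : s \in ss -> infix s (flatten ss).
Proof.
elim: ss => [|t ss IHss] //=; rewrite inE => /predU1P [->|/IHss].
  exact: prefix_infix.
exact: infix_catl.
Qed.

End AlternatingSequences.

Section SemiTransitiveOrientation.
Variables (T : finType) (E : rel T) (r : T -> nat).

Definition orient : rel T := fun u v => E u v && (r u < r v).

Definition semi_transitive :=
  forall a p, path orient a p -> orient a (last a p) -> pairwise E (a :: p).

Lemma orient_adj u v : orient u v -> E u v.
Proof. by case/andP. Qed.

Lemma connect_orient_rank u v : connect orient u v -> r u <= r v.
Proof.
case/connectP=> p + ->; elim: p u => [|y p IHp] u //=.
by case/andP=> /andP[_ /ltnW ruy] /IHp; apply: leq_trans.
Qed.

Lemma semi_transitive_connect w u v z : semi_transitive ->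
  connect orient w u -> connect orient u v -> connect orient v z ->
  orient w z -> u != v -> E u v.
Proof.
move=> hST /connectP[p1 wp1 ->] /connectP[p2 up2 ->] /connectP[p3 vp3 ->] wz uv.
have := hST w (p1 ++ p2 ++ p3); rewrite !cat_path wp1 up2 vp3 !last_cat.
rewrite -cat_cons pairwise_cat => /(_ isT wz) /and3P[/allrelP E_p1_p23 _ _].
apply: E_p1_p23; first exact: mem_last.
have := mem_last (last w p1) p2; rewrite inE eq_sym (negbTE uv) /= => vp2.
by rewrite mem_cat vp2.
Qed.

Hypothesis r_inj : injective r.

Definition rank_le : rel T := fun u v => r u <= r v.

Definition rank_enum : seq T := sort rank_le (enum T).

Definition rank_filter (A : pred T) : seq T := filter A rank_enum.

Lemma filter_pair_rank_enum u v : r u < r v ->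
  filter (pred2 u v) rank_enum = [:: u; v].
Proof.
move=> ruv; have uv : u != v by apply: contraTneq ruv => ->; rewrite ltnn.
apply: (sorted_eq (leT := rank_le)).
- by move=> y x z; apply: leq_trans.
- by move=> y z yz; apply/r_inj/anti_leq.
- by apply/sorted_filter/sort_sorted => [y x z|y z]; [apply: leq_trans | apply: leq_total].
- by rewrite /= /rank_le ltnW.
apply: uniq_perm; first by rewrite filter_uniq // sort_uniq enum_uniq.
  by rewrite /= inE uv.
by move=> z; rewrite mem_filter mem_sort mem_enum andbT !inE.
Qed.

Lemma filter_pair_rank_filter A u v : r u < r v ->
  filter (pred2 u v) (rank_filter A) = filter A [:: u; v].
Proof.
move=> ruv; rewrite -(filter_pair_rank_enum ruv) /rank_filter -!filter_predI.
by apply: eq_filter => z /=; rewrite andbC.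
Qed.

Definition rank_blocks (A D : pred T) : seq T :=
  rank_filter A ++ rank_filter D ++ rank_filter (predC A) ++ rank_filter (predC D).

Lemma filter_pair_rank_blocks A D u v : r u < r v ->
  filter (pred2 u v) (rank_blocks A D) =
  filter A [:: u; v] ++ filter D [:: u; v] ++
  filter (predC A) [:: u; v] ++ filter (predC D) [:: u; v].
Proof. by move=> ruv; rewrite !filter_cat !filter_pair_rank_filter. Qed.

Lemma rank_blocks_alternating A D u v : r u < r v ->
  (A v ==> A u) -> (D v ==> D u) -> (D u ==> A v) -> (D u ==> A u) ->
  filter (pred2 u v) (rank_blocks A D) = [:: u; v; u; v].
Proof.
move=> ruv; rewrite filter_pair_rank_blocks //=.
by case: (A u); case: (A v); case: (D u); case: (D v).
Qed.

Definition below u : pred T := [pred w | connect orient w u].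

Definition reach u : pred T :=
  [pred w | [exists d, below u d &&
                       [exists y, ((y == d) || orient d y) && connect orient w y]]].

Definition vertex_word u : seq T :=
  rank_blocks (reach u) (below u) ++ rank_blocks predT (below u).

Definition orientation_word : seq T := flatten [seq vertex_word u | u <- enum T].

Lemma below_refl u : below u u.
Proof. exact: connect0. Qed.

Lemma below_orient w u v : orient u v -> below w v -> below w u.
Proof. by move=> uv; apply: connect_trans (connect1 uv). Qed.

Lemma reach_orient w u v : orient u v -> reach w v -> reach w u.
Proof.
move=> uv /existsP[d /andP[wd /existsP[y /andP[dy vy]]]].
apply/existsP; exists d; rewrite wd; apply/existsP; exists y.
by rewrite dy (connect_trans (connect1 uv) vy).
Qed.

Lemma reach_below_out w u v : below w u -> orient u v -> reach w v.
Proof.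
move=> wu uv; apply/existsP; exists u; rewrite wu; apply/existsP; exists v.
by rewrite uv orbT connect0.
Qed.

Lemma reach_below w u : below w u -> reach w u.
Proof.
move=> wu; apply/existsP; exists u; rewrite wu; apply/existsP; exists u.
by rewrite eqxx connect0.
Qed.

Lemma filter_pair_vertex_word w u v : orient u v ->
  filter (pred2 u v) (vertex_word w) = alt_seq u v 8.
Proof.
move=> uv; have ruv : r u < r v by case/andP: uv.
have below_uv : below w v ==> below w u by apply/implyP/below_orient.
rewrite filter_cat !rank_blocks_alternating //; apply/implyP => //.
- exact: reach_orient.
- by move/reach_below_out; apply.
- exact: reach_below.
Qed.

Lemma filter_pair_orientation_word u v : orient u v ->
  filter (pred2 u v) orientation_word = alt_seq u v (size (enum T) * (2 * 4)).
Proof.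
move=> uv; rewrite filter_flatten -map_comp.
by apply: flatten_alt_seq => w; apply: filter_pair_vertex_word.
Qed.

Lemma reach_nonadjacent u v : semi_transitive -> r u < r v -> ~~ E u v ->
  connect orient u v -> reach u v = false.
Proof.
move=> hST ruv nEuv uv; apply/negbTE/existsP=> -[d /andP[du /existsP[y /andP[dy vy]]]].
have neq_uv : u != v by apply: contraTneq ruv => ->; rewrite ltnn.
case/predU1P: dy => [yd | dy].
  move: du; rewrite -yd => /(connect_trans vy)/connect_orient_rank.
  by rewrite leqNgt ruv.
by move/negP: nEuv; apply; apply: semi_transitive_connect hST du uv vy dy neq_uv.
Qed.

Lemma orientation_word_square u v : semi_transitive -> r u < r v -> ~~ E u v ->
  exists c, infix [:: c; c] (filter (pred2 u v) orientation_word).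
Proof.
move=> hST ruv nEuv; rewrite filter_flatten -map_comp.
have in_word w c : infix [:: c; c] (filter (pred2 u v) (vertex_word w)) ->
    infix [:: c; c] (flatten [seq filter (pred2 u v) (vertex_word w) | w <- enum T]).
  by move/infix_trans; apply; apply/infix_flatten/map_f; rewrite mem_enum.
rewrite /vertex_word; case: (boolP (connect orient u v)) => [uv | nuv].
  exists u; apply: (in_word u); rewrite filter_cat filter_pair_rank_blocks //=.
  have /negbTE-> : ~~ below u v by apply/negP => /connect_orient_rank; rewrite leqNgt ruv.
  rewrite (reach_nonadjacent hST ruv nEuv uv) (reach_below (below_refl u)) below_refl.
  exact: prefix_infix.
exists v; apply: (in_word v); rewrite filter_cat (filter_pair_rank_blocks predT) //=.
rewrite below_refl (negbTE (nuv : ~~ below v u)); apply: infix_catl.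
exact: (infix_catl [:: u] (prefix_infix [:: v; v] [:: u])).
Qed.

Lemma mem_orientation_word v : v \in orientation_word.
Proof.
apply/flattenP; exists (vertex_word v); first by rewrite map_f ?mem_enum.
by rewrite mem_cat orbC mem_cat mem_filter mem_sort mem_enum.
Qed.

Hypothesis E_sym : symmetric E.

Theorem semi_transitive_word_representable : semi_transitive -> word_representable E.
Proof.
move=> hST; exists orientation_word.
split=> [|u v neq_uv]; first exact: mem_orientation_word.
wlog ruv : u v neq_uv / r u < r v.
  move=> hwlog; case: (ltngtP (r u) (r v)) => [|rvu|/r_inj/eqP]; first exact: hwlog.
    by rewrite E_sym alternate_sym; apply: hwlog; rewrite // eq_sym.
  by rewrite (negbTE neq_uv).
split=> [Euv | alt_uv].
  rewrite /alternate -[filter _ orientation_word]/(filter (pred2 u v) orientation_word).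
  by rewrite filter_pair_orientation_word /orient ?Euv // size_mkseq eqxx.
apply/negPn/negP => nEuv; have [c sq] := orientation_word_square hST ruv nEuv.
by have := infix_sorted sq (alternate_sorted neq_uv alt_uv); rewrite /= eqxx.
Qed.

End SemiTransitiveOrientation.

Definition col (i : nat) : nat := i %% 3.

Definition col_rank m (i : 'I_m) : nat := col i * m + i.

Lemma col_rank_inj m : injective (@col_rank m).
Proof.
move=> i j ij; apply: val_inj.
by have := congr1 (modn^~ m) ij; rewrite /col_rank !modnMDl !modn_small.
Qed.

Lemma col_rank_lt m (i j : 'I_m) : col_rank i < col_rank j ->
  col i < col j \/ col i = col j /\ i < j.
Proof.
have := ltn_ord i; have := ltn_ord j; rewrite /col_rank => jm im.
case: (ltngtP (col i) (col j)) => [| ji | ->]; [by left | | by right; lia].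
have : (col j).+1 * m <= col i * m by rewrite leq_mul2r ji orbT.
lia.
Qed.

Lemma circulant_adj_sym m R : symmetric (circulant_adj m R).
Proof. by move=> i j; rewrite /circulant_adj /circ_dist (maxnC i) (minnC i) eq_sym. Qed.

Lemma circulant_adj_jump m R (i j : 'I_m) : circulant_adj m R i j ->
  exists2 d, d \in R &
    i + d = j \/ j + d = i \/ i + (m - d) = j \/ j + (m - d) = i.
Proof.
case/andP=> _ dR; exists (circ_dist i j) => //.
by have := ltn_ord i; have := ltn_ord j; rewrite /circ_dist; lia.
Qed.

Lemma jump_circulant_adj m R d (i j : 'I_m) :
  d \in R -> 0 < d -> 2 * d <= m -> i + d = j -> circulant_adj m R i j.
Proof.
move=> dR d_gt0 dm ij; have := ltn_ord j; rewrite /circulant_adj /circ_dist => jm.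
apply/andP; split; first by apply/eqP => eij; move: ij; rewrite eij; lia.
by have -> : minn (maxn i j - minn i j) (m - (maxn i j - minn i j)) = d by lia.
Qed.

Section CirculantOrientation.
Variables n x : nat.
Hypotheses (x_gt1 : 1 < x) (x_lt_n : x < n) (n_mod3 : n %% 3 = 1) (x_mod3 : x %% 3 = 2)
  (x_le : 3 * x <= 2 * n).

Inductive circ_step (p q : nat) : Prop :=
  | StepSucc of q = p + 1 & col q = col p + 1
  | StepWrap of p = 0 & q = 2 * n - 1 & col p = 0 & col q = 1
  | StepPred of p = q + 1 & col p = 0 & col q = 2
  | StepAddX of q = p + x & col p = 0 & col q = 2
  | StepSubX of p = q + x & col q = col p + 1
  | StepWrapX of p < x & q = p + (2 * n - x) & col q = col p
  | StepAddN of q = p + n & col q = col p + 1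
  | StepSubN of p = q + n & col p = 0 & col q = 2.

(* [col] stays folded in the case analyses below, so that lia sees [col p] as an
   atom; hence the explicit bounds. *)
Definition circ_arc (p q : nat) : Prop :=
  [/\ p < 2 * n, q < 2 * n, col p < 3, col q < 3 & circ_step p q].

Lemma no_circ_arc_path5 a0 a1 a2 a3 a4 a5 :
  circ_arc a0 a1 -> circ_arc a1 a2 -> circ_arc a2 a3 -> circ_arc a3 a4 ->
  circ_arc a4 a5 -> False.
Proof.
move=> [? ? ? ? s1] [? ? ? ? s2] [? ? ? ? s3] [? ? ? ? s4] [? ? ? ? s5].
case: s1 => *; try lia; case: s2 => *; try lia; case: s3 => *; try lia;
  case: s4 => *; try lia; case: s5 => *; lia.
Qed.

Lemma no_circ_arc_shortcut4 a0 a1 a2 a3 a4 :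
  circ_arc a0 a1 -> circ_arc a1 a2 -> circ_arc a2 a3 -> circ_arc a3 a4 ->
  circ_arc a0 a4 -> False.
Proof.
move=> [? ? ? ? s1] [? ? ? ? s2] [? ? ? ? s3] [? ? ? ? s4] [? ? ? ? s5].
case: s1 => *; try lia; case: s2 => *; try lia; case: s3 => *; try lia;
  case: s4 => *; try lia; case: s5 => *; lia.
Qed.

Lemma circ_arc_shortcut3_antipodal a0 a1 a2 a3 :
  circ_arc a0 a1 -> circ_arc a1 a2 -> circ_arc a2 a3 -> circ_arc a0 a3 ->
  (a0 + n = a2 \/ a2 + n = a0) /\ (a1 + n = a3 \/ a3 + n = a1).
Proof.
move=> [? ? ? ? s1] [? ? ? ? s2] [? ? ? ? s3] [? ? ? ? s4].
case: s1 => *; try (exfalso; lia); case: s2 => *; try (exfalso; lia);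
  case: s3 => *; try (exfalso; lia); case: s4 => *; lia.
Qed.

Local Notation G := (circulant_adj (2 * n) [:: 1; x; n]).
Local Notation orientG := (orient G (@col_rank (2 * n))).

Lemma orient_circ_arc (i j : 'I_(2 * n)) : orientG i j -> circ_arc i j.
Proof.
case/andP=> /circulant_adj_jump[d dR ij] /col_rank_lt; rewrite /col => cij.
have := ltn_ord i; have := ltn_ord j => jn inn.
split; try (unfold col; lia).
move: dR ij; rewrite !inE => /or3P[] /eqP ->.
- case=> [|[|[|]]] ij.
  + by apply: StepSucc; unfold col; lia.
  + by apply: StepPred; unfold col; lia.
  + by apply: StepWrap; unfold col; lia.
  + by exfalso; lia.
- case=> [|[|[|]]] ij.
  + by apply: StepAddX; unfold col; lia.
  + by apply: StepSubX; unfold col; lia.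
  + by apply: StepWrapX; unfold col; lia.
  + by exfalso; lia.
- case=> [|[|[|]]] ij.
  + by apply: StepAddN; unfold col; lia.
  + by apply: StepSubN; unfold col; lia.
  + by apply: StepAddN; unfold col; lia.
  + by apply: StepSubN; unfold col; lia.
Qed.

Lemma orient_path_size (a : 'I_(2 * n)) p :
  path orientG a p -> orientG a (last a p) -> size p <= 3.
Proof.
case: p => [|b1 [|b2 [|b3 [|b4 p]]]] //=.
case/and5P=> /orient_circ_arc e1 /orient_circ_arc e2 /orient_circ_arc e3
  /orient_circ_arc e4.
case: p => [|b5 p] /=.
  by move=> _ /orient_circ_arc /(no_circ_arc_shortcut4 e1 e2 e3 e4).
by case/andP=> /orient_circ_arc /(no_circ_arc_path5 e1 e2 e3 e4).
Qed.

Lemma circulant_semi_transitive : semi_transitive G (@col_rank (2 * n)).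
Proof.
have antipodal (i j : 'I_(2 * n)) : i + n = j \/ j + n = i -> G i j.
  have n_in : n \in [:: 1; x; n] by rewrite !inE eqxx !orbT.
  have n_gt0 : 0 < n by lia.
  by case=> ij; [|rewrite circulant_adj_sym]; apply: jump_circulant_adj n_in n_gt0 (leqnn _) ij.
move=> a p ap sc; have := orient_path_size ap sc.
case: p ap sc => [|b1 [|b2 [|b3 [|]]]] //= ap sc _; rewrite !andbT.
- exact: orient_adj sc.
- by case/and3P: ap => e1 e2 _; rewrite !(orient_adj e1, orient_adj e2, orient_adj sc).
case/and4P: ap => e1 e2 e3 _.
have [/antipodal -> /antipodal ->] :=
  circ_arc_shortcut3_antipodal (orient_circ_arc e1) (orient_circ_arc e2)
    (orient_circ_arc e3) (orient_circ_arc sc).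
by rewrite !(orient_adj e1, orient_adj e2, orient_adj e3, orient_adj sc).
Qed.

End CirculantOrientation.

Theorem corollary7 (n x : nat) :
  1 < x -> x < n ->
  n %% 3 = 1 -> x %% 3 = 2 -> 3 * x <= 2 * n ->
  word_representable (circulant_adj (2 * n) [:: 1; x; n]).
Proof.
move=> x_gt1 x_lt_n n_mod3 x_mod3 x_le.
apply: semi_transitive_word_representable.
- exact: col_rank_inj.
- exact: circulant_adj_sym.
exact: circulant_semi_transitive.
Qed.
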